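(* The set of periodic points of $R$ is dense in $[0,1]$, and for every integer $n\ge1$ the map $R$ has uncountably many periodic points of minimal period $n$.
   Context: Define $\rho$ on binary words: for $b=b_1b_2\dots$, $\rho(b)$ is obtained by deleting every digit $b_n=0$ and replacing every $b_n=1$ by $0$ if $n$ is odd and by $1$ if $n$ is even. For $x\in(0,1]$ let $\beta(x)$ be the unique binary expansion of $x$ with infinitely many $1$'s. Define $R:[0,1]\to[0,1]$ by $R(0)=2/3$ and, for $x\in(0,1]$, $R(x)=\sum_{n\ge1}c_n2^{-n}$ where $c=\rho(\beta(x))$. *)

From Stdlib Require Import Reals Lra Arith ClassicalEpsilon.
From Coquelicot Require Import Coquelicot.
Open Scope R_scope.

(* Infinite binary words are encoded 0-based: b k is the digit b_(k+1)
   of the paper's word b = b_1 b_2 ... *)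
Definition word := nat -> bool.

Definition bin_val (b : word) : R :=
  Series (fun k => if b k then (1/2)^(k+1) else 0).

Definition inf_many_ones (b : word) : Prop :=
  forall N : nat, exists k : nat, (N <= k)%nat /\ b k = true.

(* beta x : the (unique, for x in (0,1]) binary expansion of x with
   infinitely many 1's, chosen by Hilbert's epsilon. *)
Definition beta (x : R) : word :=
  epsilon (inhabits (fun _ : nat => false))
    (fun b => inf_many_ones b /\ bin_val b = x).

(* number of 1's among b_1 ... b_(k+1)  (0-based: among b 0 .. b k) *)
Fixpoint ones (b : word) (k : nat) : nat :=
  match k with
  | O => if b O then 1%nat else 0%nat
  | S k' => (ones b k' + (if b (S k') then 1%nat else 0%nat))%nat
  end.

(* rho b: delete the 0 digits; the digit b_n = 1 becomes 0 if n is odd and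
   1 if n is even.  The (j+1)-th digit of rho b (0-based index j) comes from
   the (j+1)-th 1 of b; with 0-based index k, paper position n = k+1 is even
   iff k is odd.  If rho b is a finite word, missing digits are 0 (this never
   happens for b = beta x). *)
Definition rho (b : word) : word :=
  fun j => if excluded_middle_informative
                (exists k, b k = true /\ ones b k = S j /\ Nat.odd k = true)
           then true else false.

Definition Rmap (x : R) : R :=
  if Req_EM_T x 0 then 2/3 else bin_val (rho (beta x)).

Definition is_periodic (x : R) : Prop :=
  0 <= x <= 1 /\ exists n : nat, (1 <= n)%nat /\ Nat.iter n Rmap x = x.

Definition has_min_period (n : nat) (x : R) : Prop :=
  0 <= x <= 1 /\ Nat.iter n Rmap x = x /\
  forall m : nat, (1 <= m < n)%nat -> Nat.iter m Rmap x <> x.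

Definition uncountable (P : R -> Prop) : Prop :=
  ~ exists f : nat -> R, forall x, P x -> exists k : nat, f k = x.

From Stdlib Require Import Reals Lra Lia Arith ClassicalEpsilon Classical FunctionalExtensionality.
From Coquelicot Require Import Coquelicot.
Open Scope R_scope.

(* A word with infinitely many 1's is determined by its value, so beta
   recovers it and R (bin_val b) = bin_val (rho b) for such words b.  The map rho sends the
   1 of rank j of b to digit j of rho b, equal to 1 iff that 1 sits at an odd (0-based)
   position.  Periodic points are therefore obtained from families of words W i with
   rho (W i) = W (next i) for a cyclic map next.  Such families are built by a self-referential
   construction: W i starts with a prescribed prefix f i, followed by two-digit blocks; a block
   is either blank (00) or holds a single 1 whose parity encodes the digit of W (next i) it
   must produce. *)

(** * Counting 1's *)

(* [cnt1 b m] is the number of 1's among the first [m] digits [b 0 .. b (m-1)];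
   the rank of a 1 of [b] at position [q] is [cnt1 b q]. *)
Fixpoint cnt1 (b : word) (m : nat) : nat :=
  match m with
  | O => O
  | S m' => (cnt1 b m' + (if b m' then 1 else 0))%nat
  end.

Lemma ones_cnt1 (b : word) (k : nat) : ones b k = cnt1 b (S k).
Proof. induction k as [|k IH]; simpl; [now destruct (b O)|]. now rewrite IH. Qed.

Lemma cnt1_le (b : word) (m : nat) : (cnt1 b m <= m)%nat.
Proof. induction m; simpl; [lia|destruct (b m); lia]. Qed.

Lemma cnt1_lt (b : word) (m p : nat) : (p < m)%nat -> b p = false -> (cnt1 b m < m)%nat.
Proof.
  induction m as [|m IH]; intros Hp Hb; [lia|]. simpl.
  destruct (Nat.eq_dec p m) as [->|Hne].
  - rewrite Hb. pose proof (cnt1_le b m). lia.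
  - specialize (IH ltac:(lia) Hb). destruct (b m); lia.
Qed.

Lemma cnt1_mono (b : word) (m1 m2 : nat) : (m1 <= m2)%nat -> (cnt1 b m1 <= cnt1 b m2)%nat.
Proof. induction 1; simpl; [lia|destruct (b m); lia]. Qed.

Lemma cnt1_ext (b c : word) (m : nat) :
  (forall p, (p < m)%nat -> b p = c p) -> cnt1 b m = cnt1 c m.
Proof.
  induction m as [|m IH]; intros H; simpl; [reflexivity|].
  rewrite IH by (intros; apply H; lia). rewrite H by lia. reflexivity.
Qed.

Lemma cnt1_S_true (b : word) (m : nat) : b m = true -> cnt1 b (S m) = S (cnt1 b m).
Proof. intros H. simpl. rewrite H. lia. Qed.

Lemma cnt1_all_ones (b : word) (m : nat) :
  (forall p, (p < m)%nat -> b p = true) -> cnt1 b m = m.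
Proof.
  induction m as [|m IH]; intros H; simpl; auto.
  rewrite IH by (intros; apply H; lia). rewrite H by lia. lia.
Qed.

Lemma ones_inj (b : word) (a1 a2 : nat) :
  b a1 = true -> b a2 = true -> ones b a1 = ones b a2 -> a1 = a2.
Proof.
  intros H1 H2 H. rewrite !ones_cnt1, !cnt1_S_true in H by assumption.
  destruct (Nat.lt_total a1 a2) as [Hl|[Hl|Hl]]; auto; exfalso.
  - pose proof (cnt1_mono b (S a1) a2 Hl) as Hm. rewrite cnt1_S_true in Hm by assumption. lia.
  - pose proof (cnt1_mono b (S a2) a1 Hl) as Hm. rewrite cnt1_S_true in Hm by assumption. lia.
Qed.

Lemma one_of_rank (b : word) (m j : nat) :
  (j < cnt1 b m)%nat -> exists q, (q < m)%nat /\ b q = true /\ cnt1 b q = j.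
Proof.
  induction m as [|m IH]; simpl; intros Hj; [lia|].
  destruct (Nat.lt_ge_cases j (cnt1 b m)) as [Hlt|Hge].
  - destruct (IH Hlt) as [q [Hq Hbq]]. exists q. split; [lia|exact Hbq].
  - destruct (b m) eqn:E; [|lia]. exists m. repeat split; auto; lia.
Qed.

(** * The digit map rho *)

Lemma bool_eq_iff (a b : bool) : (a = true <-> b = true) -> a = b.
Proof. destruct a, b; intuition congruence. Qed.

Lemma rho_true (b : word) (j : nat) :
  rho b j = true <-> exists k, b k = true /\ ones b k = S j /\ Nat.odd k = true.
Proof. unfold rho. destruct excluded_middle_informative; split; intros; auto; congruence. Qed.

Lemma rho_at (b : word) (q : nat) : b q = true -> rho b (cnt1 b q) = Nat.odd q.
Proof.
  intros Hq. apply bool_eq_iff. rewrite rho_true. split.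
  - intros [k [Hk [Hrank Hodd]]].
    replace q with k; auto. apply ones_inj with b; auto.
    rewrite Hrank, ones_cnt1, cnt1_S_true; auto.
  - intros Hodd. exists q. rewrite ones_cnt1, cnt1_S_true; auto.
Qed.

Definition vanishes_from (g : word) (M : nat) : Prop := forall p, (M <= p)%nat -> g p = false.

Lemma vanishes_from_mono (g : word) (s1 s2 : nat) :
  (s1 <= s2)%nat -> vanishes_from g s1 -> vanishes_from g s2.
Proof. intros H Hg p Hp. apply Hg. lia. Qed.

Lemma cnt1_vanishes (g : word) (m : nat) : vanishes_from g 0 -> cnt1 g m = O.
Proof. intros H. induction m; simpl; auto. rewrite IHm, H by lia. reflexivity. Qed.

Lemma rho_vanishes (g : word) (M : nat) : vanishes_from g M -> vanishes_from (rho g) (cnt1 g M).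
Proof.
  intros Hg j Hj. destruct (rho g j) eqn:E; auto.
  apply rho_true in E as [k [Hk [Hrank _]]].
  assert (k < M)%nat by (destruct (Nat.lt_ge_cases k M); auto; rewrite Hg in Hk; easy).
  rewrite ones_cnt1 in Hrank. pose proof (cnt1_mono g (S k) M ltac:(lia)). lia.
Qed.

(* Two applications of rho shorten the support of a finitely supported word:
   either [g] has a 0 in [0, s], and already [rho g] lives in [0, s), or
   [g = 1^(s+1) 0^oo], [rho g] starts with 0 and [rho (rho g)] lives in [0, s). *)
Lemma rho2_vanishes (g : word) (s : nat) :
  vanishes_from g (S s) -> vanishes_from (rho (rho g)) s.
Proof.
  intros Hg. pose proof (rho_vanishes _ _ Hg) as Hrho.
  pose proof (rho_vanishes _ _ Hrho) as Hrho2.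
  destruct (classic (exists p, (p < S s)%nat /\ g p = false)) as [[p [Hp Hgp]]|Hnone].
  - pose proof (cnt1_lt g (S s) p Hp Hgp).
    pose proof (cnt1_le (rho g) (cnt1 g (S s))).
    eapply vanishes_from_mono; [|exact Hrho2]. lia.
  - assert (Hones : forall p, (p < S s)%nat -> g p = true).
    { intros p Hp. destruct (g p) eqn:E; auto. exfalso; eauto. }
    rewrite (cnt1_all_ones g (S s) Hones) in Hrho, Hrho2.
    assert (Hfirst : rho g 0%nat = false) by exact (rho_at g 0 (Hones 0%nat ltac:(lia))).
    pose proof (cnt1_lt (rho g) (S s) 0 ltac:(lia) Hfirst).
    eapply vanishes_from_mono; [|exact Hrho2]. lia.
Qed.

Lemma rho_iter_kills (g : word) (s : nat) :
  vanishes_from g s -> forall i, (2 * s <= i)%nat -> vanishes_from (Nat.iter i rho g) 0.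
Proof.
  revert g; induction s as [|s IH]; intros g Hg i Hi.
  - induction i as [|i IHi]; simpl; auto.
    eapply vanishes_from_mono; [|apply rho_vanishes, IHi; lia]. simpl; lia.
  - replace i with ((i - 2) + 2)%nat by lia. rewrite Nat.iter_add.
    apply IH; [|lia]. apply rho2_vanishes, Hg.
Qed.

(** * Binary values *)

Definition term (b : word) (k : nat) : R := if b k then (1/2)^(k+1) else 0.

Lemma geom_half : is_series (fun k : nat => (1/2)^(k+1)) 1.
Proof.
  assert (H : Rabs (1/2) < 1) by (rewrite Rabs_pos_eq; lra).
  pose proof (is_series_scal_l (1/2) _ _ (is_series_geom (1/2) H)) as Hs.
  match type of Hs with is_series _ ?l =>
    replace l with 1 in Hs by (unfold scal; simpl; unfold mult; simpl; field) end.
  eapply is_series_ext; [|exact Hs]. intros n.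
  unfold scal; simpl; unfold mult; simpl. rewrite Nat.add_1_r. reflexivity.
Qed.

Lemma term_bounds (b : word) (n : nat) : 0 <= term b n <= (1/2)^(n+1).
Proof. unfold term. assert (0 < (1/2)^(n+1)) by (apply pow_lt; lra). destruct (b n); lra. Qed.

Lemma ex_series_term (b : word) : ex_series (term b).
Proof.
  apply (@ex_series_le R_AbsRing R_CompleteNormedModule _ (fun k : nat => (1/2)^(k+1)));
    [|eexists; apply geom_half].
  intros n. change (norm (term b n)) with (Rabs (term b n)).
  pose proof (term_bounds b n). rewrite Rabs_pos_eq; lra.
Qed.

Lemma bin_val_bounds (b : word) : 0 <= bin_val b <= 1.
Proof.
  unfold bin_val. split.
  - assert (Hzero : Series (fun _ : nat => 0) = 0).
    { rewrite (Series_ext _ (fun _ : nat => 0 * 0)) by (intros; ring).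
      rewrite Series_scal_l. ring. }
    rewrite <- Hzero at 1. apply Series_le; [|apply ex_series_term].
    intros n. pose proof (term_bounds b n). unfold term in *. lra.
  - apply Rle_trans with (Series (fun k : nat => (1/2)^(k+1))).
    + apply Series_le; [|eexists; apply geom_half].
      intros n. pose proof (term_bounds b n). unfold term in *. lra.
    + right. apply is_series_unique, geom_half.
Qed.

Lemma bin_val_cons (b : word) :
  bin_val b = (if b O then 1/2 else 0) + /2 * bin_val (fun p => b (S p)).
Proof.
  unfold bin_val. rewrite Series_incr_1 by apply ex_series_term. rewrite <- Series_scal_l.
  f_equal.
  - destruct (b O); simpl; lra.
  - apply Series_ext. intros n. destruct (b (S n)); simpl; lra.
Qed.

Fixpoint prefix_sum (b : word) (N : nat) : R :=
  match N with O => 0 | S N' => prefix_sum b N' + term b N' end.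

Lemma prefix_sum_nonneg (b : word) (N : nat) : 0 <= prefix_sum b N.
Proof. induction N; simpl; [lra|]. pose proof (term_bounds b N). lra. Qed.

Lemma prefix_sum_ext (b c : word) (N : nat) :
  (forall p, (p < N)%nat -> b p = c p) -> prefix_sum b N = prefix_sum c N.
Proof.
  induction N as [|N IH]; intros H; simpl; auto.
  rewrite IH by (intros; apply H; lia). unfold term. rewrite H by lia. reflexivity.
Qed.

Lemma bin_val_split (b : word) (N : nat) :
  bin_val b = prefix_sum b N + (1/2)^N * bin_val (fun p => b (N + p)%nat).
Proof.
  induction N as [|N IH].
  - simpl. ring_simplify. reflexivity.
  - rewrite IH, (bin_val_cons (fun p => b (N + p)%nat)).
    replace (fun p => b (N + S p)%nat) with (fun p => b (S N + p)%nat)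
      by (apply functional_extensionality; intros; f_equal; lia).
    simpl prefix_sum. unfold term. rewrite Nat.add_0_r, Nat.add_1_r. simpl pow.
    destruct (b N); field.
Qed.

Lemma bin_val_pos (b : word) (k : nat) : b k = true -> 0 < bin_val b.
Proof.
  intros H. rewrite (bin_val_split b k), bin_val_cons, Nat.add_0_r, H.
  pose proof (prefix_sum_nonneg b k).
  pose proof (bin_val_bounds (fun p => b (k + S p)%nat)).
  assert (0 < (1/2)^k) by (apply pow_lt; lra). nra.
Qed.

(* Lexicographic comparison: if [b] and [c] first differ at [k] with [b k = 0 < 1 = c k],
   then [bin_val b < bin_val c], provided [c] does not end in 0^oo (.0111... = .1000...). *)
Lemma bin_val_lt (b c : word) (k : nat) :
  (forall q, (q < k)%nat -> b q = c q) -> b k = false -> c k = true ->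
  inf_many_ones c -> bin_val b < bin_val c.
Proof.
  intros Hq Hb Hc Hinf. rewrite (bin_val_split b k), (bin_val_split c k), (prefix_sum_ext b c k Hq).
  rewrite (bin_val_cons (fun p => b (k + p)%nat)), (bin_val_cons (fun p => c (k + p)%nat)).
  rewrite Nat.add_0_r, Hb, Hc.
  destruct (Hinf (S k)) as [p [Hp Hcp]].
  assert (0 < bin_val (fun p0 => c (k + S p0)%nat)).
  { apply (bin_val_pos _ (p - S k)). rewrite <- Hcp. f_equal. lia. }
  pose proof (bin_val_bounds (fun p0 => b (k + S p0)%nat)).
  assert (0 < (1/2)^k) by (apply pow_lt; lra). nra.
Qed.

Lemma bin_val_inj (b c : word) :
  inf_many_ones b -> inf_many_ones c -> bin_val b = bin_val c -> b = c.
Proof.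
  intros Hb Hc E. apply functional_extensionality. intros p.
  induction p as [p IH] using (well_founded_induction lt_wf).
  destruct (b p) eqn:E1, (c p) eqn:E2; auto; exfalso.
  - pose proof (bin_val_lt c b p (fun q Hq => eq_sym (IH q Hq)) E2 E1 Hb). lra.
  - pose proof (bin_val_lt b c p IH E1 E2 Hc). lra.
Qed.

Lemma beta_bin_val (b : word) : inf_many_ones b -> beta (bin_val b) = b.
Proof.
  intros Hb. unfold beta.
  destruct (epsilon_spec (inhabits (fun _ : nat => false))
     (fun b' => inf_many_ones b' /\ bin_val b' = bin_val b)) as [H1 H2].
  { exists b. auto. }
  apply bin_val_inj; auto.
Qed.

Lemma Rmap_bin_val (b : word) : inf_many_ones b -> Rmap (bin_val b) = bin_val (rho b).
Proof.
  intros Hb. unfold Rmap. destruct (Req_EM_T (bin_val b) 0) as [E|E].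
  - exfalso. destruct (Hb O) as [k [_ Hk]]. pose proof (bin_val_pos b k Hk). lra.
  - rewrite beta_bin_val; auto.
Qed.

(** * Words on which rho acts along a prescribed map of indices *)

Open Scope nat_scope.

Fixpoint nonblank_before (blk : nat -> bool) (k : nat) : nat :=
  match k with
  | O => O
  | S k' => nonblank_before blk k' + (if blk k' then 0 else 1)
  end.

Lemma nonblank_before_le (blk : nat -> bool) (k : nat) :
  blk 0 = true -> nonblank_before blk (S k) <= k.
Proof. intros H. induction k; simpl in *; [rewrite H; lia|destruct (blk (S k)); lia]. Qed.

Lemma nonblank_before_const (blk : nat -> bool) (K k : nat) :
  K <= k -> (forall q, K <= q < k -> blk q = true) -> nonblank_before blk k = nonblank_before blk K.
Proof.
  induction 1 as [|k Hle IH]; intros Hq; auto. simpl.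
  rewrite IH by (intros; apply Hq; lia). rewrite Hq by lia. lia.
Qed.

Lemma first_nonblank (blk : nat -> bool) (d K : nat) : blk (K + d) = false ->
  exists k, K <= k /\ blk k = false /\ (forall q, K <= q < k -> blk q = true).
Proof.
  revert K; induction d as [|d IH]; intros K H.
  - exists K. rewrite Nat.add_0_r in H. repeat split; auto; lia.
  - destruct (blk K) eqn:E.
    + destruct (IH (S K)) as [k [H1 [H2 H3]]]; [rewrite <- H; f_equal; lia|].
      exists k. repeat split; auto; [lia|]. intros q Hq.
      destruct (Nat.eq_dec q K); [subst; auto|]. apply H3; lia.
    + exists K. repeat split; auto; lia.
Qed.

Lemma nonblank_rank_surj (blk : nat -> bool) : (forall K, exists k, K <= k /\ blk k = false) ->
  forall j, exists k, blk k = false /\ nonblank_before blk k = j.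
Proof.
  intros Hinf j. induction j as [|j IH].
  - destruct (Hinf 0) as [k0 [_ Hk0]].
    destruct (first_nonblank blk k0 0 Hk0) as [k [_ [H2 H3]]].
    exists k. split; auto. rewrite (nonblank_before_const blk 0 k); auto; lia.
  - destruct IH as [k1 [Hk1 Hrank]].
    destruct (Hinf (S k1)) as [k0 [Hle Hk0]].
    destruct (first_nonblank blk (k0 - S k1) (S k1)) as [k [H1 [H2 H3]]];
      [replace (S k1 + (k0 - S k1)) with k0 by lia; auto|].
    exists k. split; auto.
    rewrite (nonblank_before_const blk (S k1) k); auto. simpl. rewrite Hk1. lia.
Qed.

(* Given a length [L], prefixes [f i], blank patterns [blank i] and a map
   [next] on indices, the word [W i] consists of the first [L] digits of [f i], followed by
   blocks of two digits: block [k] is 00 if [blank i k], and otherwise contains a single 1,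
   placed at an odd or even position according to the digit of [W (next i)] that this 1 has
   to produce under rho (namely the digit of rank [cnt1 (f i) L + nonblank_before (blank i) k]).
   Since block 0 is always blank, that rank is smaller than the positions of block [k], so
   the definition (by recursion with fuel) is well founded. *)
Section SelfSimilarWords.

Variables (L : nat) (f : nat -> word) (blank : nat -> nat -> bool) (next : nat -> nat).

Fixpoint Wfuel (fuel i p : nat) : bool :=
  match fuel with
  | O => false
  | S fuel' =>
      if p <? L then f i p else
      if blank i ((p - L) / 2) then false else
      let d := Wfuel fuel' (next i) (cnt1 (f i) L + nonblank_before (blank i) ((p - L) / 2)) in
      if Nat.odd p then d else negb d
  end.

Definition W (i : nat) : word := fun p => Wfuel (S p) i p.

Hypothesis blank0 : forall i, blank i 0 = true.

Lemma rank_lt_position (i p : nat) : ~ p < L -> blank i ((p - L) / 2) = false ->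
  cnt1 (f i) L + nonblank_before (blank i) ((p - L) / 2) < p.
Proof.
  intros H1 H2. set (k := (p - L) / 2) in *.
  assert (Hk : k <> 0) by (intros E; rewrite E, blank0 in H2; discriminate).
  pose proof (Nat.Div0.mul_div_le (p - L) 2) as Hdiv. fold k in Hdiv.
  destruct k as [|k']; [lia|]. pose proof (nonblank_before_le (blank i) k' (blank0 i)).
  pose proof (cnt1_le (f i) L). lia.
Qed.

Lemma Wfuel_enough (fuel1 fuel2 i p : nat) :
  p < fuel1 -> p < fuel2 -> Wfuel fuel1 i p = Wfuel fuel2 i p.
Proof.
  revert fuel2 i p; induction fuel1 as [|fuel1 IH]; intros fuel2 i p H1 H2; [lia|].
  destruct fuel2 as [|fuel2]; [lia|]. cbn [Wfuel].
  destruct (p <? L) eqn:E; [reflexivity|]. destruct (blank i ((p - L) / 2)) eqn:E2; [reflexivity|].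
  apply Nat.ltb_ge in E. pose proof (rank_lt_position i p ltac:(lia) E2).
  rewrite (IH fuel2) by lia. reflexivity.
Qed.

Lemma W_eq (i p : nat) : W i p =
   if p <? L then f i p else
   if blank i ((p - L) / 2) then false else
   let d := W (next i) (cnt1 (f i) L + nonblank_before (blank i) ((p - L) / 2)) in
   if Nat.odd p then d else negb d.
Proof.
  unfold W at 1. cbn [Wfuel].
  destruct (p <? L) eqn:E; [reflexivity|]. destruct (blank i ((p - L) / 2)) eqn:E2; [reflexivity|].
  apply Nat.ltb_ge in E. pose proof (rank_lt_position i p ltac:(lia) E2) as Hlt.
  set (r := cnt1 (f i) L + nonblank_before (blank i) ((p - L) / 2)) in *.
  unfold W. cbv zeta. rewrite (Wfuel_enough p (S r)) by lia. reflexivity.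
Qed.

Lemma W_prefix (i p : nat) : p < L -> W i p = f i p.
Proof. intros H. rewrite W_eq. apply Nat.ltb_lt in H. rewrite H. reflexivity. Qed.

Definition block_digit (i k : nat) : bool :=
  W (next i) (cnt1 (f i) L + nonblank_before (blank i) k).

Lemma W_block_even (i k : nat) : W i (L + 2 * k) =
  if blank i k then false else if Nat.odd L then block_digit i k else negb (block_digit i k).
Proof.
  rewrite W_eq. destruct (L + 2 * k <? L) eqn:E; [apply Nat.ltb_lt in E; lia|].
  replace ((L + 2 * k - L) / 2) with k
    by (replace (L + 2 * k - L) with (k * 2) by lia; rewrite Nat.div_mul; lia).
  rewrite Nat.odd_add_mul_2. reflexivity.
Qed.

Lemma W_block_odd (i k : nat) : W i (L + 2 * k + 1) =
  if blank i k then false else if Nat.odd L then negb (block_digit i k) else block_digit i k.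
Proof.
  rewrite W_eq. destruct (L + 2 * k + 1 <? L) eqn:E; [apply Nat.ltb_lt in E; lia|].
  replace ((L + 2 * k + 1 - L) / 2) with k
    by (replace (L + 2 * k + 1 - L) with (1 + k * 2) by lia;
        rewrite Nat.div_add by lia; reflexivity).
  rewrite Nat.add_1_r, Nat.odd_succ, Nat.even_add_mul_2, <- Nat.negb_odd.
  destruct (blank i k), (Nat.odd L); reflexivity.
Qed.

(* Each nonblank block contributes exactly one 1. *)
Lemma W_ones (i k : nat) : cnt1 (W i) (L + 2 * k) = cnt1 (f i) L + nonblank_before (blank i) k.
Proof.
  induction k as [|k IH].
  - rewrite Nat.add_0_r. simpl. rewrite Nat.add_0_r. apply cnt1_ext. intros; apply W_prefix; auto.
  - replace (L + 2 * S k) with (S (S (L + 2 * k))) by lia. cbn [cnt1 nonblank_before].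
    replace (S (L + 2 * k)) with (L + 2 * k + 1) by lia.
    rewrite IH, W_block_even, W_block_odd. destruct (blank i k); [lia|].
    destruct (Nat.odd L), (block_digit i k); simpl; lia.
Qed.

Lemma block_one (i k : nat) : blank i k = false ->
  exists q, L + 2 * k <= q /\ W i q = true /\
            cnt1 (W i) q = cnt1 (W i) (L + 2 * k) /\ Nat.odd q = block_digit i k.
Proof.
  intros Hk. pose proof (W_block_even i k) as E0. pose proof (W_block_odd i k) as E1.
  rewrite Hk in E0, E1.
  assert (Hodd0 : Nat.odd (L + 2 * k) = Nat.odd L) by apply Nat.odd_add_mul_2.
  assert (Hodd1 : Nat.odd (L + 2 * k + 1) = negb (Nat.odd L))
    by (rewrite Nat.add_1_r, Nat.odd_succ, Nat.even_add_mul_2, <- Nat.negb_odd; reflexivity).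
  assert (Hcnt1 : W i (L + 2 * k) = false ->
                  cnt1 (W i) (L + 2 * k + 1) = cnt1 (W i) (L + 2 * k))
    by (intros H0; rewrite Nat.add_1_r; cbn [cnt1]; rewrite H0; lia).
  destruct (Nat.odd L), (block_digit i k); simpl in E0, E1;
    [exists (L + 2 * k) | exists (L + 2 * k + 1) | exists (L + 2 * k + 1) | exists (L + 2 * k)];
    rewrite ?Hodd0, ?Hodd1; repeat split; auto; lia.
Qed.

Lemma W_blank (i k : nat) : blank i k = negb (W i (L + 2 * k) || W i (L + 2 * k + 1)).
Proof.
  rewrite W_block_even, W_block_odd.
  destruct (blank i k), (Nat.odd L), (block_digit i k); reflexivity.
Qed.

Hypothesis nonblank_inf : forall i K, exists k, K <= k /\ blank i k = false.

Lemma W_inf_many_ones (i : nat) : inf_many_ones (W i).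
Proof.
  intros N. destruct (nonblank_inf i N) as [k [Hk Hblank]].
  destruct (block_one i k Hblank) as [q [Hq [HWq _]]]. exists q. split; [lia|exact HWq].
Qed.

Hypothesis prefix_rho : forall i t, t < cnt1 (f i) L -> f (next i) t = rho (f i) t.

Lemma W_rho_prefix (i j : nat) : j < cnt1 (f i) L -> rho (W i) j = W (next i) j.
Proof.
  intros Hj. pose proof (cnt1_le (f i) L).
  destruct (one_of_rank (f i) L j Hj) as [q [Hq [Hfq Hrank]]].
  assert (HWrank : cnt1 (W i) q = j)
    by (rewrite <- Hrank; apply cnt1_ext; intros; apply W_prefix; lia).
  rewrite W_prefix, prefix_rho by lia.
  rewrite <- HWrank at 1. rewrite <- Hrank, !rho_at; auto. rewrite W_prefix; auto.
Qed.

Lemma W_rho_blocks (i j : nat) : cnt1 (f i) L <= j -> rho (W i) j = W (next i) j.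
Proof.
  intros Hj. set (m := cnt1 (f i) L) in *.
  destruct (nonblank_rank_surj (blank i) (nonblank_inf i) (j - m)) as [k [Hk Hrank]].
  destruct (block_one i k Hk) as [q [_ [HWq [Hq Hodd]]]].
  rewrite W_ones, Hrank in Hq. fold m in Hq.
  replace j with (cnt1 (W i) q) at 1 by lia. rewrite rho_at, Hodd by exact HWq.
  unfold block_digit. fold m. rewrite Hrank. f_equal. lia.
Qed.

Lemma W_rho (i : nat) : rho (W i) = W (next i).
Proof.
  apply functional_extensionality. intros j.
  destruct (Nat.lt_ge_cases j (cnt1 (f i) L)).
  - apply W_rho_prefix; assumption.
  - apply W_rho_blocks; assumption.
Qed.

Lemma W_orbit (i m : nat) : Nat.iter m Rmap (bin_val (W i)) = bin_val (W (Nat.iter m next i)).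
Proof.
  induction m as [|m IH]; simpl; auto.
  rewrite IH, Rmap_bin_val, W_rho by apply W_inf_many_ones. reflexivity.
Qed.

End SelfSimilarWords.

(** * Density of periodic points *)

Definition cycle_succ (n i : nat) : nat := if S i <? n then S i else O.

Lemma cycle_succ_iter (n m : nat) : m < n -> Nat.iter m (cycle_succ n) O = m.
Proof.
  induction m as [|m IH]; intros H; simpl; auto. rewrite IH by lia. unfold cycle_succ.
  destruct (S m <? n) eqn:E; auto. apply Nat.ltb_ge in E. lia.
Qed.

Lemma cycle_succ_period (n : nat) : 1 <= n -> Nat.iter n (cycle_succ n) O = O.
Proof.
  intros H. destruct n as [|n]; [lia|]. simpl. rewrite cycle_succ_iter by lia. unfold cycle_succ.
  destruct (S n <? S n) eqn:E; auto. apply Nat.ltb_lt in E. lia.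
Qed.

(* Every finite prefix extends to a word whose value is periodic: take the prefixes
   [rho^i g] for [i <= 2N]; the last one is 0 (rho^(2N) kills [g]), so the cycle of
   length [2N+1] on them is compatible with rho. *)
Lemma periodic_extension (g : word) (N : nat) : vanishes_from g N ->
  exists b : word, (forall p, p < N -> b p = g p) /\ is_periodic (bin_val b).
Proof.
  intros Hg.
  set (f := fun i => Nat.iter i rho g).
  set (n := 2 * N + 1).
  set (blank := fun i k : nat => k =? 0).
  assert (Hblank0 : forall i, blank i 0 = true) by reflexivity.
  assert (Hnonblank : forall i K, exists k, K <= k /\ blank i k = false)
    by (intros i K; exists (S K); split; auto).
  assert (Hcompat : forall i t, t < cnt1 (f i) N -> f (cycle_succ n i) t = rho (f i) t).
  { intros i t Ht. unfold cycle_succ. destruct (S i <? n) eqn:E; [reflexivity|].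
    apply Nat.ltb_ge in E. exfalso.
    rewrite cnt1_vanishes in Ht; [lia|]. apply (rho_iter_kills g N Hg). lia. }
  exists (W N f blank (cycle_succ n) 0). split.
  - intros p Hp. rewrite W_prefix; auto.
  - split; [apply bin_val_bounds|]. exists n. split; [lia|].
    rewrite (W_orbit N f blank (cycle_succ n) Hblank0 Hnonblank Hcompat), cycle_succ_period by lia.
    reflexivity.
Qed.

Open Scope R_scope.

Fixpoint binary_rest (y : R) (p : nat) : R :=
  match p with
  | O => y
  | S p' => if Rle_dec (1/2) (binary_rest y p') then 2 * binary_rest y p' - 1
            else 2 * binary_rest y p'
  end.

Definition binary_digit (y : R) (p : nat) : bool :=
  if Rle_dec (1/2) (binary_rest y p) then true else false.

Lemma binary_rest_bounds (y : R) (p : nat) : 0 <= y <= 1 -> 0 <= binary_rest y p <= 1.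
Proof. intros H; induction p; simpl; auto. destruct Rle_dec; lra. Qed.

Lemma binary_expansion (y : R) (N : nat) :
  y = prefix_sum (binary_digit y) N + (1/2)^N * binary_rest y N.
Proof.
  induction N as [|N IH]; simpl; [ring|]. rewrite IH at 1. unfold term, binary_digit.
  rewrite Nat.add_1_r. simpl pow. destruct Rle_dec; field.
Qed.

Lemma close_to_digits (y : R) (N : nat) (b : word) : 0 <= y <= 1 ->
  (forall p, (p < N)%nat -> b p = binary_digit y p) -> Rabs (bin_val b - y) <= (1/2)^N.
Proof.
  intros Hy Hb.
  rewrite (bin_val_split b N), (binary_expansion y N) at 1. rewrite (prefix_sum_ext _ _ N Hb).
  pose proof (bin_val_bounds (fun p => b (N + p)%nat)).
  pose proof (binary_rest_bounds y N Hy).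
  assert (0 < (1/2)^N) by (apply pow_lt; lra).
  match goal with |- Rabs ?e <= _ =>
    replace e with ((1/2)^N * (bin_val (fun p => b (N + p)%nat) - binary_rest y N)) by ring end.
  rewrite Rabs_mult, Rabs_pos_eq by lra.
  rewrite <- Rmult_1_r. apply Rmult_le_compat_l; [lra|]. apply Rabs_le. lra.
Qed.

(* Density: extend the first [N] binary digits of [y], with [2^-N < eps], periodically. *)
Lemma periodic_dense (y eps : R) : 0 <= y <= 1 -> 0 < eps ->
  exists x, is_periodic x /\ Rabs (x - y) < eps.
Proof.
  intros Hy Heps.
  destruct (pow_lt_1_zero (1/2) ltac:(rewrite Rabs_pos_eq; lra) eps Heps) as [N HN].
  specialize (HN N (le_n N)). rewrite Rabs_pos_eq in HN by (apply pow_le; lra).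
  set (g := fun p => andb (p <? N)%nat (binary_digit y p)).
  assert (Hg : vanishes_from g N)
    by (intros p Hp; unfold g; apply Nat.ltb_ge in Hp; rewrite Hp; reflexivity).
  destruct (periodic_extension g N Hg) as [b [Hprefix Hper]].
  exists (bin_val b). split; [exact Hper|].
  apply Rle_lt_trans with ((1/2)^N); [|exact HN].
  apply close_to_digits; auto. intros p Hp.
  rewrite Hprefix by exact Hp. unfold g. apply Nat.ltb_lt in Hp. rewrite Hp. reflexivity.
Qed.

(** * Uncountably many points of minimal period n *)

(* Cantor's diagonal argument: a property satisfied by an injective image of the
   binary sequences is uncountable. *)
Lemma uncountable_of_injection (P : R -> Prop) (x : (nat -> bool) -> R) :
  (forall s, P (x s)) -> (forall s s', x s = x s' -> s = s') -> uncountable P.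
Proof.
  intros HP Hinj [F HF].
  set (g := fun j => epsilon (inhabits (fun _ : nat => false)) (fun s => x s = F j)).
  set (s := fun k => negb (g k k)).
  destruct (HF _ (HP s)) as [j Hj].
  assert (Hg : x (g j) = F j) by (apply epsilon_spec; exists s; symmetry; exact Hj).
  assert (Hgs : g j = s) by (apply Hinj; congruence).
  assert (Hdiag : s j = negb (g j j)) by reflexivity.
  rewrite Hgs in Hdiag. destruct (s j); discriminate.
Qed.

Open Scope nat_scope.

(* Blank patterns for a cycle of length [n] with empty prefixes: in the word [i], the
   blocks [k <= i] are blank (so the [n] words differ), and in the word 0 the block
   [2j+2] is moreover blank iff [s j] (so that the word 0 encodes [s]). *)
Definition coded_blank (s : nat -> bool) (i k : nat) : bool :=
  (k <=? i) || ((i =? 0) && Nat.even k && s (k / 2 - 1)).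

Definition coded_word (n : nat) (s : nat -> bool) (i : nat) : word :=
  W 0 (fun _ _ => false) (coded_blank s) (cycle_succ n) i.

Lemma coded_blank0 (s : nat -> bool) (i : nat) : coded_blank s i 0 = true.
Proof. reflexivity. Qed.

(* Odd blocks beyond [i] are never blank. *)
Lemma coded_nonblank_inf (s : nat -> bool) (i K : nat) :
  exists k, K <= k /\ coded_blank s i k = false.
Proof.
  exists (2 * (K + i) + 1). split; [lia|]. unfold coded_blank.
  replace (2 * (K + i) + 1 <=? i) with false by (symmetry; apply Nat.leb_gt; lia).
  rewrite Nat.add_1_r, Nat.even_succ, Nat.odd_mul. simpl. now destruct (i =? 0).
Qed.

Lemma coded_word_blank (n : nat) (s : nat -> bool) (i k : nat) :
  coded_blank s i k = negb (coded_word n s i (2 * k) || coded_word n s i (2 * k + 1)).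
Proof. apply (W_blank 0 _ _ _ (coded_blank0 s)). Qed.

Lemma coded_word_inf (n : nat) (s : nat -> bool) (i : nat) : inf_many_ones (coded_word n s i).
Proof. apply W_inf_many_ones; [apply coded_blank0|apply coded_nonblank_inf]. Qed.

Lemma coded_word_orbit (n : nat) (s : nat -> bool) (m : nat) :
  Nat.iter m Rmap (bin_val (coded_word n s 0)) =
  bin_val (coded_word n s (Nat.iter m (cycle_succ n) 0)).
Proof.
  apply W_orbit; [apply coded_blank0|apply coded_nonblank_inf|].
  intros i t Ht. simpl in Ht. lia.
Qed.

Lemma coded_word_min_period (n : nat) (s : nat -> bool) :
  1 <= n -> has_min_period n (bin_val (coded_word n s 0)).
Proof.
  intros Hn. split; [apply bin_val_bounds|]. split.
  - rewrite coded_word_orbit, cycle_succ_period; auto.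
  - intros m Hm E. rewrite coded_word_orbit, cycle_succ_iter in E by lia.
    apply bin_val_inj in E; [|apply coded_word_inf|apply coded_word_inf].
    (* block 1 is blank in word [m >= 1] but not in word 0 *)
    pose proof (coded_word_blank n s m 1) as Hm1. pose proof (coded_word_blank n s 0 1) as H01.
    rewrite E, <- H01 in Hm1. unfold coded_blank in Hm1.
    replace (1 <=? m) with true in Hm1 by (symmetry; apply Nat.leb_le; lia). discriminate.
Qed.

(* The value of word 0 determines [s], through its blank blocks [2j+2]. *)
Lemma coded_word_inj (n : nat) (s s' : nat -> bool) :
  bin_val (coded_word n s 0) = bin_val (coded_word n s' 0) -> s = s'.
Proof.
  intros E. apply bin_val_inj in E; [|apply coded_word_inf|apply coded_word_inf].
  apply functional_extensionality. intros j.
  assert (Hcode : forall s0, coded_blank s0 0 (2 * j + 2) = s0 j).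
  { intros s0. unfold coded_blank.
    replace (2 * j + 2) with (2 * (j + 1)) by lia.
    replace (2 * (j + 1) / 2 - 1) with j by (rewrite Nat.mul_comm, Nat.div_mul; lia).
    replace (2 * (j + 1) <=? 0) with false by (symmetry; apply Nat.leb_gt; lia).
    rewrite Nat.even_mul. reflexivity. }
  rewrite <- (Hcode s), <- (Hcode s'), !(coded_word_blank n), E. reflexivity.
Qed.

Lemma uncountable_min_period (n : nat) : 1 <= n -> uncountable (has_min_period n).
Proof.
  intros Hn. apply (uncountable_of_injection _ (fun s => bin_val (coded_word n s 0))).
  - intros s. apply coded_word_min_period, Hn.
  - apply coded_word_inj.
Qed.

Open Scope R_scope.

Theorem proposition6p4 :
  (forall y eps : R, 0 <= y <= 1 -> 0 < eps ->
     exists x : R, is_periodic x /\ Rabs (x - y) < eps) /\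
  (forall n : nat, (1 <= n)%nat -> uncountable (has_min_period n)).
Proof. split; [exact periodic_dense|exact uncountable_min_period]. Qed.
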